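(* Let $p, q$ be primes and $n, r \geq 1$ integers such that $p^n < qp^r$, $q$ divides $p^n - 1$, and $p^r$ divides $n$. Then exactly one of the following holds: (1) $p = 2$, $q = 3$, $n = 2$, $r = 1$; (2) $p = 2$, $q = 5$, $n = 4$, $r = 2$; (3) $p > 2$, $q = (p^p - 1)/(p-1)$, $n = p$, $r = 1$. *)

From mathcomp Require Import all_boot.

From mathcomp Require Import all_boot.
From mathcomp Require Import zify.

Set Implicit Arguments.
Unset Strict Implicit.

(* Write n = m p and x = p ^ m, so that p ^ n - 1 = (x - 1) S with
   S = 1 + x + ... + x ^ (p - 1) < 2 x ^ (p - 1).  A prime divisor q of
   x ^ p - 1 divides x - 1 or S, so q < 2 x ^ (p - 1) <= p ^ (m (p - 1) + 1),
   and p ^ n < q p ^ r forces m <= r.  As p ^ (r - 1) divides m, we get m = r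
   and p ^ (r - 1) <= r, i.e. r = 1 or p = r = 2.  Now q > x ^ (p - 1) >= x,
   so q divides S < 2 q, whence q = S. *)

Lemma dvdn_subn1_lt_exp_pred (d x k : nat) :
  1 < x -> 1 < k -> d %| x - 1 -> d < x ^ k.-1.
Proof.
move=> x_gt1 k_gt1 /dvdn_leq; rewrite subn_gt0 => /(_ x_gt1) d_le.
have : x <= x ^ k.-1 by rewrite -{1}(expn1 x); apply: leq_pexp2l; lia.
lia.
Qed.

Lemma geom_sum_gt0 (x k : nat) : 0 < k -> 0 < \sum_(i < k) x ^ i.
Proof. by case: k => // k _; rewrite big_ord_recl expn0. Qed.

Lemma geom_sum_lt (x k : nat) : 1 < x -> 0 < k -> \sum_(i < k) x ^ i < 2 * x ^ k.-1.
Proof.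
move=> x_gt1; elim: k => // k IHk _; rewrite big_ord_recr /=.
case: k IHk => [|k] IHk; first by rewrite big_ord0.
rewrite mul2n -addnn ltn_add2r; apply: leq_trans (IHk isT) _.
by rewrite expnS leq_mul2r x_gt1 orbT.
Qed.

Lemma prime_dvd_pow_subn1 (q x k : nat) :
  prime q -> q %| x ^ k - 1 -> (q %| x - 1) || (q %| \sum_(i < k) x ^ i).
Proof. by move=> q_pr; rewrite !subn1 predn_exp Euclid_dvdM. Qed.

Lemma prime_dvd_pow_subn1_lt (q x k : nat) :
  prime q -> 1 < x -> 1 < k -> q %| x ^ k - 1 -> q < 2 * x ^ k.-1.
Proof.
move=> q_pr x_gt1 k_gt1 /(prime_dvd_pow_subn1 q_pr) /orP[q_x | q_S].
  by have := dvdn_subn1_lt_exp_pred x_gt1 k_gt1 q_x; lia.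
apply: leq_ltn_trans (geom_sum_lt x_gt1 (ltnW k_gt1)).
exact: dvdn_leq (geom_sum_gt0 x (ltnW k_gt1)) q_S.
Qed.

Lemma prime_dvd_pow_subn1_eq (q x k : nat) :
  prime q -> 1 < x -> 1 < k -> q %| x ^ k - 1 -> x ^ k.-1 < q ->
  q = \sum_(i < k) x ^ i.
Proof.
move=> q_pr x_gt1 k_gt1 q_dvd q_gt.
have q_S : q %| \sum_(i < k) x ^ i.
  case/orP: (prime_dvd_pow_subn1 q_pr q_dvd) => // q_x.
  by have := dvdn_subn1_lt_exp_pred x_gt1 k_gt1 q_x; lia.
have [c def_S] := dvdnP q_S.
have c_lt2 : c < 2.
  rewrite -(ltn_pmul2r (prime_gt0 q_pr)) -def_S.
  by apply: leq_trans (geom_sum_lt x_gt1 (ltnW k_gt1)) _; rewrite leq_pmul2l // ltnW.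
have := geom_sum_gt0 x (ltnW k_gt1).
by rewrite def_S; case: c {def_S} c_lt2 => [|[|]] // _ _; rewrite mul1n.
Qed.

Lemma exp_dvdn_split (p r n : nat) :
  0 < p -> 0 < r -> 0 < n -> p ^ r %| n -> exists2 m, n = m * p & p ^ r.-1 <= m.
Proof.
move=> p_gt0 r_gt0 n_gt0 /dvdnP[c def_n].
have c_gt0 : 0 < c by move: n_gt0; rewrite def_n muln_gt0 => /andP[].
exists (c * p ^ r.-1); last exact: leq_pmull.
by rewrite def_n -mulnA -expnSr prednK.
Qed.

Lemma exp_pred_le_id (p r : nat) :
  1 < p -> 0 < r -> p ^ r.-1 <= r -> r = 1 \/ p = 2 /\ r = 2.
Proof.
move=> p_gt1; case: r => [|[|[|r]]] // _ /=; first by left.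
  by rewrite expn1 => p_le2; right; lia.
have : 2 ^ r.+2 <= p ^ r.+2 by rewrite leq_exp2r.
by have := ltn_expl r (isT : 1 < 2); rewrite !expnS; lia.
Qed.

Section ExponentBound.

Variables p q m r : nat.
Hypotheses (p_pr : prime p) (q_pr : prime q) (r_gt0 : 0 < r).
Hypotheses (pr_le_m : p ^ r.-1 <= m) (q_gt : p ^ (m * p) < q * p ^ r).
Hypothesis q_dvd : q %| (p ^ m) ^ p - 1.

Let p_gt1 : 1 < p := prime_gt1 p_pr.

Lemma leq_r_m : r <= m.
Proof. by have := ltn_expl r.-1 p_gt1; rewrite prednK // => /leq_trans; apply. Qed.

Lemma leq_m_r : m <= r.
Proof.
have x_gt1 : 1 < p ^ m by rewrite -(expn0 p) ltn_exp2l //; have := leq_r_m; lia.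
have q_lt := prime_dvd_pow_subn1_lt q_pr x_gt1 p_gt1 q_dvd.
have : p ^ (m * p) < p ^ (m * p.-1 + 1 + r).
  apply: (leq_trans q_gt); rewrite !expnD expn1 expnM leq_pmul2r ?expn_gt0 ?(ltnW p_gt1) //.
  by apply: leq_trans (ltnW q_lt) _; rewrite mulnC leq_mul2l p_gt1 orbT.
rewrite ltn_exp2l // -[p in m * p](prednK (ltnW p_gt1)) mulnS; lia.
Qed.

Lemma eq_m_r : m = r.
Proof. by apply/eqP; rewrite eqn_leq leq_m_r leq_r_m. Qed.

Lemma r_eq1_or_p_r_eq2 : r = 1 \/ p = 2 /\ r = 2.
Proof. by apply: exp_pred_le_id p_gt1 r_gt0 _; rewrite -[X in _ <= X]eq_m_r. Qed.

Lemma q_eq_geom_sum : q = \sum_(i < p) (p ^ r) ^ i.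
Proof.
have x_gt1 : 1 < p ^ r by rewrite -(expn0 p) ltn_exp2l.
have q_dvd_r : q %| (p ^ r) ^ p - 1 by rewrite -eq_m_r.
apply: prime_dvd_pow_subn1_eq q_dvd_r _ => //.
rewrite -(ltn_pmul2r (ltnW x_gt1)) -expnSr prednK ?(ltnW p_gt1) //.
by rewrite -expnM -{1}eq_m_r.
Qed.

End ExponentBound.

Lemma exactly_one_of3 (A B C : Prop) :
  (A -> ~ B) -> (A -> ~ C) -> (B -> ~ C) -> [\/ A, B | C] ->
  [\/ A /\ ~ B /\ ~ C, ~ A /\ B /\ ~ C | ~ A /\ ~ B /\ C].
Proof. by move=> nAB nAC nBC [a|b|c]; [constructor 1|constructor 2|constructor 3]; tauto. Qed.

Theorem lemma6 (p q n r : nat) :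
  prime p -> prime q -> 1 <= n -> 1 <= r ->
  p ^ n < q * p ^ r -> q %| p ^ n - 1 -> p ^ r %| n ->
  let C1 := [/\ p = 2, q = 3, n = 2 & r = 1] in
  let C2 := [/\ p = 2, q = 5, n = 4 & r = 2] in
  let C3 := [/\ 2 < p, q = (p ^ p - 1) %/ (p - 1), n = p & r = 1] in
  [\/ C1 /\ ~ C2 /\ ~ C3, ~ C1 /\ C2 /\ ~ C3 | ~ C1 /\ ~ C2 /\ C3].
Proof.
move=> p_pr q_pr n_gt0 r_gt0 q_gt q_dvd pr_dvd C1 C2 C3.
have p_gt1 := prime_gt1 p_pr.
have [m def_n pr_le_m] := exp_dvdn_split (ltnW p_gt1) r_gt0 n_gt0 pr_dvd.
rewrite def_n in q_gt; rewrite def_n expnM in q_dvd.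
have m_r := eq_m_r p_pr q_pr r_gt0 pr_le_m q_gt q_dvd.
have def_q := q_eq_geom_sum p_pr q_pr r_gt0 pr_le_m q_gt q_dvd.
apply: exactly_one_of3; rewrite /C1 /C2 /C3; try by do 2!case=> ? ? ? ?; lia.
rewrite def_n m_r.
case: (r_eq1_or_p_r_eq2 p_pr q_pr r_gt0 pr_le_m q_gt q_dvd) => [r1 | [p2 r2]].
  have [p2 | p_gt2] : p = 2 \/ 2 < p by lia.
    by constructor 1; rewrite def_q p2 r1 !big_ord_recr big_ord0.
  constructor 3; split; rewrite ?r1 ?mul1n //.
  by rewrite def_q r1 expn1 !subn1 predn_exp mulKn // -subn1 subn_gt0.
by constructor 2; rewrite def_q p2 r2 !big_ord_recr big_ord0.
Qed.
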